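(* Let $H$ be a Kekul\'ean hexagonal system and $n\ge 0$. For every Clar cover $C$ of $H$ with exactly $n$ hexagons, the graph $f(C)$ is isomorphic to the $n$-cube $Q_n$; hence $f(C)$ is an induced subgraph of $R(H)$ isomorphic to $Q_n$.
   Context: A hexagonal system is a 2-connected finite plane graph in which every interior face is a regular hexagon of side length one; its hexagons are the boundaries of its interior faces; it is Kekul\'ean if it has a perfect matching. A Clar cover of $H$ is a spanning subgraph each of whose components is a hexagon of $H$ or a single edge. The resonance graph $R(H)$ has the perfect matchings of $H$ as vertices, two adjacent iff their symmetric difference is the edge set of a hexagon of $H$. For a Clar cover $C$, $f(C)$ denotes the subgraph of $R(H)$ induced by all perfect matchings $M$ of $H$ such that every hexagon component of $C$ is $M$-alternating (its edges alternately in and not in $M$) and every single-edge component of $C$ belongs to $M$. *)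

From HB Require Import structures.
From mathcomp Require Import all_boot all_order all_algebra.
From mathcomp Require Import finmap.
Set Implicit Arguments. Unset Strict Implicit. Unset Printing Implicit Defensive.
Import Order.TTheory GRing.Theory Num.Theory.
Local Open Scope fset_scope.

(* The hexagonal (honeycomb) lattice, in its "brick wall" combinatorial model:
   vertices are integer points (i,j); horizontal edges (i,j)-(i+1,j) always,
   vertical edges (i,j)-(i,j+1) exactly when i+j is even.  The hexagonal cells
   are indexed by their lower-left corner (i,j) with i+j even; the cell (i,j)
   has the six vertices (i..i+2, j..j+1). *)
Definition Vertex := (int * int)%type.
Definition Cell := (int * int)%type.
(* edge (v, false) = horizontal edge v -- v+(1,0);
   edge (v, true)  = vertical edge   v -- v+(0,1). *)
Definition Edge := ((int * int) * bool)%type.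

Definition valid_cell (c : Cell) : bool := modz (c.1 + c.2)%R 2 == 0.

Definition ends (e : Edge) : {fset Vertex} :=
  if e.2 then [fset e.1; (e.1.1, e.1.2 + 1)%R]
  else [fset e.1; (e.1.1 + 1, e.1.2)%R].

Definition hex_vertices (c : Cell) : {fset Vertex} :=
  let: (i, j) := c in
  [fset (i, j); (i + 1, j)%R; (i + 2, j)%R;
        (i, j + 1)%R; (i + 1, j + 1)%R; (i + 2, j + 1)%R].

(* the six edges of the hexagon, in cyclic order around it *)
Definition hex_cycle (c : Cell) : seq Edge :=
  let: (i, j) := c in
  [:: ((i, j), false); ((i + 1, j)%R, false); ((i + 2, j)%R, true);
      ((i + 1, j + 1)%R, false); ((i, j + 1)%R, false); ((i, j), true)].

Definition hex_edges (c : Cell) : {fset Edge} := [fset e | e in hex_cycle c].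

(* edge-adjacency of cells (they share an edge) *)
Definition cell_adj (c d : Cell) : bool :=
  d \in [:: (c.1 + 2, c.2)%R; (c.1 - 2, c.2)%R; (c.1 + 1, c.2 + 1)%R;
            (c.1 - 1, c.2 + 1)%R; (c.1 + 1, c.2 - 1)%R; (c.1 - 1, c.2 - 1)%R].

Definition VH (S : {fset Cell}) : {fset Vertex} := \bigcup_(c <- S) hex_vertices c.
Definition EH (S : {fset Cell}) : {fset Edge} := \bigcup_(c <- S) hex_edges c.

Definition adjE (E : {fset Edge}) (u v : Vertex) : bool :=
  (u != v) && has (fun e => ends e == [fset u; v]) E.

(* 2-connected: at least 3 vertices, and for every vertex w (which may also be
   outside the graph, giving plain connectedness) any two vertices distinct
   from w are joined by a path avoiding w. *)
Definition two_connected (S : {fset Cell}) : Prop :=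
  (3 <= #|` VH S|)%N /\
  forall w u v, u \in VH S -> v \in VH S -> u != w -> v != w ->
    exists p : seq Vertex, path (adjE (EH S)) u p /\ last u p = v /\
      all (fun x => (x \in VH S) && (x != w)) p.

(* Every bounded face of the plane graph H(S) is one of its cells: every cell
   not in S lies in the unbounded region of the complement, i.e. is joined by
   edge-adjacent cells not in S to cells arbitrarily far away. *)
Definition no_holes (S : {fset Cell}) : Prop :=
  forall c : Cell, valid_cell c -> c \notin S ->
    forall N : nat, exists p : seq Cell,
      path cell_adj c p /\ all (fun d => d \notin S) p /\
      (N <= absz (last c p).1 + absz (last c p).2)%N.

Definition hexagonal_system (S : {fset Cell}) : Prop :=
  (forall c, c \in S -> valid_cell c) /\ two_connected S /\ no_holes S.

Definition perfect_matching (S : {fset Cell}) (M : {fset Edge}) : Prop :=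
  M `<=` EH S /\ forall v, v \in VH S -> #|` [fset e in M | v \in ends e]| = 1%N.

Definition kekulean (S : {fset Cell}) : Prop := exists M, perfect_matching S M.

Definition alternating (M : {fset Edge}) (c : Cell) : bool :=
  cycle (fun x y : bool => x != y) [seq (e \in M) | e <- hex_cycle c].

Definition symdiff (M N : {fset Edge}) : {fset Edge} := (M `\` N) `|` (N `\` M).

Definition res_adj (S : {fset Cell}) (M N : {fset Edge}) : Prop :=
  perfect_matching S M /\ perfect_matching S N /\
  exists2 h, h \in S & symdiff M N = hex_edges h.

Definition reach (F : {fset Edge}) (u v : Vertex) : Prop :=
  exists p : seq Vertex, path (adjE F) u p /\ last u p = v.

Definition component_is (F : {fset Edge}) (v : Vertex)
  (X : {fset Vertex}) (EX : {fset Edge}) : Prop :=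
  (forall x, reach F v x <-> x \in X) /\ [fset e in F | ends e `<=` X] = EX.

Definition hex_comp (S : {fset Cell}) (F : {fset Edge}) (h : Cell) : Prop :=
  h \in S /\ exists2 v, v \in VH S & component_is F v (hex_vertices h) (hex_edges h).

Definition edge_comp (S : {fset Cell}) (F : {fset Edge}) (e : Edge) : Prop :=
  e \in F /\ exists2 v, v \in VH S & component_is F v (ends e) [fset e].

Definition clar_cover (S : {fset Cell}) (F : {fset Edge}) : Prop :=
  F `<=` EH S /\
  forall v, v \in VH S ->
    (exists2 h, h \in S & component_is F v (hex_vertices h) (hex_edges h)) \/
    (exists2 e, e \in F & component_is F v (ends e) [fset e]).

Definition fC (S : {fset Cell}) (F : {fset Edge}) (M : {fset Edge}) : Prop :=
  perfect_matching S M /\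
  (forall h, hex_comp S F h -> alternating M h) /\
  (forall e, edge_comp S F e -> e \in M).

Definition cube_adj (n : nat) (x y : {ffun 'I_n -> bool}) : bool :=
  #|[set i | x i != y i]| == 1%N.

From HB Require Import structures.
From mathcomp Require Import all_boot all_order all_algebra.
From mathcomp Require Import finmap zify.
Set Implicit Arguments. Unset Strict Implicit. Unset Printing Implicit Defensive.
Local Open Scope fset_scope.

(* A perfect matching M lies in f(C) iff it contains every single-edge component
   of C and restricts, on each hexagon component, to one of the two perfect
   matchings of that hexagon.  As the components of C partition the vertices of
   H, every such choice does give a perfect matching, so numbering the n hexagon
   components yields a bijection x |-> M_x from {0,1}^n onto f(C).  M_x and M_y
   differ exactly on the hexagons where x and y differ, hence their symmetric
   difference is a single hexagon iff x and y are adjacent in Q_n. *)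

Definition alt_mask (b : bool) : bitseq := [:: ~~ b; b; ~~ b; b; ~~ b; b].

Definition hex_match (b : bool) (c : Cell) : seq Edge := mask (alt_mask b) (hex_cycle c).

Lemma alt_mask_negb b : alt_mask (~~ b) = map negb (alt_mask b).
Proof. by case: b. Qed.

Lemma size_hex_cycle c : size (hex_cycle c) = 6.
Proof. by case: c. Qed.

Lemma cycle_neq6P (s : bitseq) :
  size s = 6 -> reflect (exists b, s = alt_mask b) (cycle (fun x y => x != y) s).
Proof.
case: s => [|x0 [|x1 [|x2 [|x3 [|x4 [|x5 [|]]]]]]] // _.
apply: (iffP idP) => [|[[] ->] //].
by case: x0 x1 x2 x3 x4 x5 => [] [] [] [] [] [] //; [exists false | exists true].
Qed.

Lemma mask_map_eq (T : eqType) (P : pred T) (s : seq T) (m : bitseq) :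
  size m = size s -> {subset mask m s <= P} -> {subset mask (map negb m) s <= predC P} ->
  map P s = m.
Proof.
elim: s m => [|x s IH] [|[] m] //= [sz] Hin Hout; congr (_ :: _).
- exact: Hin (mem_head _ _).
- by apply: IH => // y ys; apply: Hin; rewrite inE ys orbT.
- by apply: negbTE; apply: Hout (mem_head _ _).
- by apply: IH => // y ys; apply: Hout; rewrite inE ys orbT.
Qed.

Lemma alternatingP (M : {fset Edge}) c :
  reflect (exists b, [seq e \in M | e <- hex_cycle c] = alt_mask b) (alternating M c).
Proof. by apply: cycle_neq6P; rewrite size_map size_hex_cycle. Qed.

Lemma hex_match_filter (M : {fset Edge}) c b :
  [seq e \in M | e <- hex_cycle c] = alt_mask b ->
  hex_match b c = [seq e <- hex_cycle c | e \in M].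
Proof. by rewrite /hex_match filter_mask => ->. Qed.

Lemma alternating_hex_match M c :
  alternating M c -> {subset hex_match ((c, false) \notin M) c <= M}.
Proof.
case/alternatingP => b Hb; have Eb : b = ((c, false) \notin M).
  by move: Hb; case: c => i j [/(congr1 negb)]; rewrite negbK.
by rewrite -Eb (hex_match_filter Hb) => e; rewrite mem_filter => /andP[].
Qed.

Lemma hex_match_alternating M c b : {subset hex_match b c <= M} ->
  {subset hex_match (~~ b) c <= [predC M]} -> alternating M c.
Proof.
rewrite /hex_match alt_mask_negb => Hin Hout; apply/alternatingP; exists b.
by apply: mask_map_eq; rewrite // size_hex_cycle.
Qed.

(* Memberships in these small sets of concrete points are restated as seq
   memberships: the fset membership lemmas, rewritten on terms like (i + 1, j),
   trigger very costly conversions on integer arithmetic. *)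
Lemma mem_ends e v :
  (v \in ends e) = (v \in [:: e.1; if e.2 then (e.1.1, e.1.2 + 1)%R else (e.1.1 + 1, e.1.2)%R]).
Proof. by rewrite /ends; case: e.2; rewrite !inE. Qed.

Lemma ends_fst e : e.1 \in ends e.
Proof. by rewrite mem_ends mem_head. Qed.

Lemma mem_hex_vertices i j v : (v \in hex_vertices (i, j)) =
  (v \in [:: (i, j); (i + 1, j)%R; (i + 2, j)%R; (i, j + 1)%R; (i + 1, j + 1)%R; (i + 2, j + 1)%R]).
Proof. by rewrite !inE -!orbA. Qed.

Lemma mem_fset_seq (T : choiceType) (s : seq T) x : (x \in [fset y | y in s]) = (x \in s).
Proof. by apply/imfsetP/idP => [[y /= ys ->]|xs] //; exists x. Qed.

Lemma mem_hex_edges c e : (e \in hex_edges c) = (e \in hex_cycle c).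
Proof. exact: mem_fset_seq. Qed.

Lemma hex_edges_base c : (c, false) \in hex_edges c.
Proof. by rewrite mem_hex_edges; case: c => i j; rewrite mem_head. Qed.

Lemma hex_match_sub b c e : e \in hex_match b c -> e \in hex_edges c.
Proof. by rewrite mem_hex_edges; apply: mem_mask. Qed.

Ltac split_mem := repeat match goal with
  | H : is_true (_ || _) |- _ => case/orP: H => H
  | H : is_true (_ == _) |- _ => move/eqP: H => H; subst
  end.

Lemma hex_edges_ends c e v : e \in hex_edges c -> v \in ends e -> v \in hex_vertices c.
Proof.
rewrite mem_hex_edges; case: c => i j; rewrite mem_hex_vertices /= !inE => He; split_mem;
rewrite mem_ends /= !inE => Hv; split_mem; rewrite !xpair_eqE; lia.
Qed.

Lemma hex_edges_match c e : e \in hex_edges c -> exists b, e \in hex_match b c.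
Proof.
rewrite mem_hex_edges; case: c => i j; rewrite /= !inE => H; split_mem;
  [exists false|exists true|exists false|exists true|exists false|exists true];
  by rewrite /= !inE !eqxx ?orbT.
Qed.

Lemma hex_match_negb b c e : e \in hex_match b c -> e \notin hex_match (~~ b) c.
Proof.
case: c => i j; case: b; rewrite /= !inE => H; split_mem;
by rewrite !xpair_eqE /= ?andbF ?andbT ?orbF; lia.
Qed.

Ltac cover_by e :=
  exists e; [by rewrite /= !inE eqxx ?orbT | by rewrite mem_ends /= !inE !xpair_eqE /=; lia].

Lemma hex_match_cover b c v :
  v \in hex_vertices c -> exists2 e, e \in hex_match b c & v \in ends e.
Proof.
case: c => i j; rewrite mem_hex_vertices !inE => H; split_mem; case: b;
  first [ cover_by ((i, j), false) | cover_by ((i + 1, j)%R, false)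
        | cover_by ((i, j), true) | cover_by ((i + 2, j)%R, true)
        | cover_by ((i, j + 1)%R, false) | cover_by ((i + 1, j + 1)%R, false) ].
Qed.

Lemma hex_match_uniq b c e e' v : e \in hex_match b c -> e' \in hex_match b c ->
  v \in ends e -> v \in ends e' -> e = e'.
Proof.
case: c => i j; case: b; rewrite /= !inE => He He'; split_mem;
rewrite // !mem_ends /= !inE => Hv; split_mem; rewrite !xpair_eqE /= => Hv'; exfalso; lia.
Qed.

Lemma hex_edges_sub_eq c d : hex_edges d `<=` hex_edges c -> d = c.
Proof.
case: c => i j; case: d => k l /fsubsetP sub.
have := sub ((k, l), true); have := sub ((k + 2, l)%R, true).
rewrite !mem_hex_edges /= !inE !eqxx ?orbT !xpair_eqE /= ?andbF ?orbF => /(_ isT) h1 /(_ isT) h2.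
apply/eqP; rewrite xpair_eqE; lia.
Qed.

Lemma hex_edges_neq_fset1 c e : hex_edges c != [fset e].
Proof.
apply/eqP; case: c => i j E.
have := hex_edges_base (i, j); have : ((i + 1, j)%R, false) \in hex_edges (i, j).
  by rewrite mem_hex_edges /= !inE eqxx orbT.
by rewrite E !inE => /eqP <- /eqP []; lia.
Qed.

Lemma bigfcup_finP (T : choiceType) (I : finType) (P : pred I) (A : I -> {fset T}) x :
  reflect (exists2 i, P i & x \in A i) (x \in \bigcup_(i | P i) A i).
Proof.
apply: (iffP (bigfcupP (index_enum I) x A P)) => [[i /andP[_ Pi] xA]|[i Pi xA]]; first by exists i.
by exists i; rewrite ?mem_index_enum.
Qed.

Lemma cardfs1_eq (T : choiceType) (A : {fset T}) a b :
  #|` A| = 1%N -> a \in A -> b \in A -> a = b.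
Proof. by move/eqP/cardfs1P => [x ->]; rewrite !inE => /eqP -> /eqP ->. Qed.

Lemma adjE_sym E u v : adjE E u v = adjE E v u.
Proof. by rewrite /adjE eq_sym fsetUC. Qed.

Lemma reach_refl E u : reach E u u.
Proof. by exists [::]. Qed.

Lemma reach_trans E u v w : reach E u v -> reach E v w -> reach E u w.
Proof.
move=> [p [Hp Lp]] [q [Hq Lq]]; exists (p ++ q).
by rewrite cat_path last_cat Lp Hp Hq.
Qed.

Lemma reach_step E u v : adjE E u v -> reach E u v.
Proof. by move=> H; exists [:: v]; rewrite /= H. Qed.

Lemma reach_sym E u v : reach E u v -> reach E v u.
Proof.
move=> [p [Hp Lp]]; elim: p u Hp Lp => [|w p IH] u /=; first by move=> _ ->; apply: reach_refl.
move=> /andP[Huw Hp] Lp; apply: reach_trans (IH w Hp Lp) _.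
by apply: reach_step; rewrite adjE_sym.
Qed.

Lemma adjE_ends E e u v : e \in E -> u \in ends e -> v \in ends e -> u != v -> adjE E u v.
Proof.
move=> eE ue ve uv; rewrite /adjE uv; apply/hasP; exists e => //.
move: ue ve uv; have [a [b ->]] : exists a b, ends e = [fset a; b].
  by rewrite /ends; case: e.2; do 2 eexists.
rewrite !inE => /orP[]/eqP-> /orP[]/eqP->; rewrite ?eqxx // => _.
by rewrite fsetUC.
Qed.

Lemma component_is_mem F v X EX : component_is F v X EX -> v \in X.
Proof. by case=> H _; apply/H/reach_refl. Qed.

Lemma component_is_eq F v w X Y EX EY u : component_is F v X EX -> component_is F w Y EY ->
  u \in X -> u \in Y -> X = Y /\ EX = EY.
Proof.
move=> [HX <-] [HY <-] /HX rvu /HY rwu.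
suff XY : X = Y by rewrite XY.
apply/fsetP => x; apply/idP/idP => [/HX rvx | /HY rwx].
  by apply/HY; apply: reach_trans rwu (reach_trans (reach_sym rvu) rvx).
by apply/HX; apply: reach_trans rvu (reach_trans (reach_sym rwu) rwx).
Qed.

Lemma component_is_edge F v X EX e u :
  component_is F v X EX -> e \in F -> u \in ends e -> u \in X -> e \in EX.
Proof.
move=> [HX <-] eF ue /HX rvu; rewrite !inE /= eF /=.
apply/fsubsetP => y ye; apply/HX; apply: reach_trans rvu _.
have [<-|uy] := eqVneq u y; first exact: reach_refl.
exact/reach_step/(adjE_ends eF).
Qed.

Lemma EH_ends_VH S e v : e \in EH S -> v \in ends e -> v \in VH S.
Proof.
move=> /bigfcupP [c /andP[cS _] ec] ve.
by apply/bigfcupP; exists c; [rewrite cS | exact: hex_edges_ends ec ve].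
Qed.

Section ClarCover.

Variables (S : {fset Cell}) (F : {fset Edge}) (n : nat) (hex : 'I_n -> Cell).
Hypothesis cover : clar_cover S F.
Hypothesis hex_inj : injective hex.
Hypothesis hex_compP : forall h, hex_comp S F h <-> exists i, hex i = h.

Definition single_edges : {fset Edge} := F `\` \bigcup_(i in 'I_n) hex_edges (hex i).

Definition clar_matching (x : {ffun 'I_n -> bool}) : {fset Edge} :=
  single_edges `|` \bigcup_(i in 'I_n) [fset e | e in hex_match (x i) (hex i)].

Lemma hex_component i : exists v, component_is F v (hex_vertices (hex i)) (hex_edges (hex i)).
Proof. by have [_ [v _ Hv]] := (hex_compP (hex i)).2 (ex_intro _ i erefl); exists v. Qed.

Lemma hex_edges_in_F i e : e \in hex_edges (hex i) -> e \in F.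
Proof. by have [v [_ <-]] := hex_component i; rewrite !inE => /andP[]. Qed.

Lemma F_hex_edge e v i :
  e \in F -> v \in ends e -> v \in hex_vertices (hex i) -> e \in hex_edges (hex i).
Proof. by have [w Hw] := hex_component i; apply: component_is_edge Hw. Qed.

Lemma single_edgesP e :
  reflect (e \in F /\ forall i, e \notin hex_edges (hex i)) (e \in single_edges).
Proof.
apply: (iffP (fsetDP _ _ _)) => -[eF He]; split => //.
  by move=> i; apply: contra He => ei; apply/bigfcup_finP; exists i.
by apply/bigfcup_finP => -[i _]; apply/negP/He.
Qed.

Lemma component_edge_single e v :
  e \in F -> component_is F v (ends e) [fset e] -> e \in single_edges.
Proof.
move=> eF He; apply/single_edgesP; split => // i; apply/negP => ei.
have [w Hw] := hex_component i; have ue := ends_fst e.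
have [_ E] := component_is_eq He Hw ue (hex_edges_ends ei ue).
by move/eqP: (hex_edges_neq_fset1 (hex i) e); rewrite E.
Qed.

Lemma component_cases v : v \in VH S ->
  (exists i, component_is F v (hex_vertices (hex i)) (hex_edges (hex i))) \/
  (exists2 e, e \in single_edges & component_is F v (ends e) [fset e]).
Proof.
move=> vS; case: (cover.2 v vS) => [[h hS Hh]|[e eF He]].
  have [i Ei] := (hex_compP h).1 (conj hS (ex_intro2 _ _ v vS Hh)).
  by left; exists i; rewrite Ei.
by right; exists e => //; apply: component_edge_single He.
Qed.

Lemma clar_matchingP (x : {ffun 'I_n -> bool}) e : reflect
  (e \in single_edges \/ exists i, e \in hex_match (x i) (hex i)) (e \in clar_matching x).
Proof.
apply: (iffP (fsetUP _ _ _)) => -[eS|He]; [by left | right | by left | right].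
  by case/bigfcup_finP: He => i _; rewrite mem_fset_seq; exists i.
by case: He => i ei; apply/bigfcup_finP; exists i; rewrite ?mem_fset_seq.
Qed.

Lemma single_edge_component e v :
  e \in single_edges -> v \in ends e -> component_is F v (ends e) [fset e].
Proof.
case/single_edgesP => eF eH ve.
case: (component_cases (EH_ends_VH (fsubsetP cover.1 _ eF) ve)) => [[i Hi]|[f _ Hf]].
  by have := F_hex_edge eF ve (component_is_mem Hi); rewrite (negPf (eH i)).
by have := component_is_edge Hf eF ve (component_is_mem Hf); rewrite inE => /eqP ->.
Qed.

Lemma single_edge_uniq e e' v : e \in single_edges -> e' \in F ->
  v \in ends e -> v \in ends e' -> e = e'.
Proof.
move=> eS e'F ve ve'; have He := single_edge_component eS ve.
by have := component_is_edge He e'F ve' (component_is_mem He); rewrite inE => /eqP.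
Qed.

Lemma single_edge_comp e : e \in single_edges -> edge_comp S F e.
Proof.
move=> eS; have [eF _] := single_edgesP _ eS; split => //.
exists e.1; first exact: EH_ends_VH (fsubsetP cover.1 _ eF) (ends_fst e).
exact: single_edge_component eS (ends_fst e).
Qed.

Section Matching.

Variable x : {ffun 'I_n -> bool}.

Lemma clar_matching_F e : e \in clar_matching x -> e \in F.
Proof.
case/clar_matchingP => [/single_edgesP[] //|[i /hex_match_sub]].
exact: hex_edges_in_F.
Qed.

Lemma clar_matching_cover v : v \in VH S -> exists2 e, e \in clar_matching x & v \in ends e.
Proof.
case/component_cases => [[i Hi]|[e eS He]].
  have [e ei ve] := hex_match_cover (x i) (component_is_mem Hi).
  by exists e => //; apply/clar_matchingP; right; exists i.
by exists e; [apply/clar_matchingP; left | apply: component_is_mem He].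
Qed.

Lemma clar_matching_uniq e e' v : e \in clar_matching x -> e' \in clar_matching x ->
  v \in ends e -> v \in ends e' -> e = e'.
Proof.
move=> eM e'M ve ve'; have eF := clar_matching_F eM; have e'F := clar_matching_F e'M.
case/clar_matchingP: eM => [eS|[i ei]]; first exact: single_edge_uniq eS e'F ve ve'.
case/clar_matchingP: e'M => [e'S|[i' ei']]; first exact/esym/(single_edge_uniq e'S eF ve' ve).
have [w Hw] := hex_component i; have [w' Hw'] := hex_component i'.
have vi := hex_edges_ends (hex_match_sub ei) ve.
have [_ E] := component_is_eq Hw Hw' vi (hex_edges_ends (hex_match_sub ei') ve').
have ii' : i = i' by apply/hex_inj/hex_edges_sub_eq; rewrite E.
by subst i'; apply: hex_match_uniq ei ei' ve ve'.
Qed.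

Lemma clar_matching_perfect : perfect_matching S (clar_matching x).
Proof.
split; first by apply/fsubsetP => e /clar_matching_F /(fsubsetP cover.1).
move=> v vS; have [e0 e0M ve0] := clar_matching_cover vS.
suff -> : [fset e in clar_matching x | v \in ends e] = [fset e0] by rewrite cardfs1.
apply/fsetP => e; rewrite [in LHS]inE /= in_fset1; apply/andP/eqP => [[eM ve]|->] //.
exact: clar_matching_uniq eM e0M ve ve0.
Qed.

Lemma clar_matching_hex_out i e : e \in hex_match (~~ x i) (hex i) -> e \notin clar_matching x.
Proof.
move=> ei; apply/negP => eM; have ue := ends_fst e.
have [e' ei' ue'] := hex_match_cover (x i) (hex_edges_ends (hex_match_sub ei) ue).
have e'M : e' \in clar_matching x by apply/clar_matchingP; right; exists i.
by have := hex_match_negb ei'; rewrite -(clar_matching_uniq eM e'M ue ue') ei.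
Qed.

Lemma clar_matching_fC : fC S F (clar_matching x).
Proof.
split; first exact: clar_matching_perfect.
split => [h /hex_compP [i <-]|e [eF [v _ He]]].
  apply: (hex_match_alternating (b := x i)) => e ei.
    by apply/clar_matchingP; right; exists i.
  exact: (clar_matching_hex_out ei).
by apply/clar_matchingP; left; apply: component_edge_single He.
Qed.

End Matching.

Lemma clar_matching_hex x i b e :
  e \in hex_match b (hex i) -> (e \in clar_matching x) = (x i == b).
Proof.
have [<-|/negPf xb] := eqVneq (x i) b => eb.
  by apply/clar_matchingP; right; exists i.
by apply/negbTE/(clar_matching_hex_out (i := i)); move: xb eb; case: (x i) b => [] [].
Qed.

Lemma fC_clar_matching M : fC S F M -> M = clar_matching [ffun i => (hex i, false) \notin M].
Proof.
move=> [PM [Halt Hsingle]]; set x := [ffun i => _].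
have sub e : e \in clar_matching x -> e \in M.
  case/clar_matchingP => [/single_edge_comp/Hsingle //|[i]].
  by rewrite ffunE; apply/alternating_hex_match/Halt/hex_compP; exists i.
apply/fsetP => e; apply/idP/idP => [eM|]; last exact: sub.
have vS := EH_ends_VH (fsubsetP PM.1 _ eM) (ends_fst e).
have [e0 e0x ve0] := clar_matching_cover x vS.
by rewrite (cardfs1_eq (PM.2 _ vS) (a := e) (b := e0)) // !inE ?eM ?sub ?ends_fst ?ve0.
Qed.

Lemma clar_matching_inj : injective clar_matching.
Proof.
move=> x y Exy; apply/ffunP => i.
have [b eb] := hex_edges_match (hex_edges_base (hex i)).
have := congr1 (fun M => (hex i, false) \in M) Exy.
by rewrite /= !(clar_matching_hex _ eb); case: (x i) (y i) => [] []; case: b {eb}.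
Qed.

Lemma clar_matching_diff x y e : e \in clar_matching x -> e \notin clar_matching y ->
  exists2 i, x i != y i & e \in hex_edges (hex i).
Proof.
case/clar_matchingP => [eS|[i ei]] ey; first by case/clar_matchingP: ey; left.
by exists i; [rewrite eq_sym -(clar_matching_hex _ ei) | apply: hex_match_sub ei].
Qed.

Lemma symdiff_clar_matching x y :
  symdiff (clar_matching x) (clar_matching y) = \bigcup_(i | x i != y i) hex_edges (hex i).
Proof.
apply/fsetP => e; rewrite /symdiff in_fsetU !in_fsetD.
apply/idP/bigfcup_finP => [/orP[]/andP[ey ex]|[i xy /hex_edges_match [b eb]]].
- exact: clar_matching_diff ex ey.
- by have [i yx ei] := clar_matching_diff ex ey; exists i; rewrite // eq_sym.
- by rewrite !(clar_matching_hex _ eb); move: xy; case: (x i) (y i) => [] []; case: b {eb}.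
Qed.

Lemma res_adj_clar_matching x y :
  res_adj S (clar_matching x) (clar_matching y) <-> cube_adj x y.
Proof.
rewrite /res_adj /cube_adj symdiff_clar_matching; split.
  move=> [_ [_ [h hS E]]].
  have [i1 xy1 _] : exists2 i, x i != y i & (h, false) \in hex_edges (hex i).
    by apply/bigfcup_finP; rewrite E hex_edges_base.
  have hex_eq i : x i != y i -> hex i = h.
    move=> xy; apply: hex_edges_sub_eq; rewrite -E.
    by apply/fsubsetP => e ei; apply/bigfcup_finP; exists i.
  apply/cards1P; exists i1; apply/setP => i; rewrite !inE.
  apply/idP/eqP => [xy|->] //; apply: hex_inj; by rewrite !hex_eq.
move/cards1P => [i1 Exy].
have xyP i : (x i != y i) = (i == i1) by move/setP/(_ i): Exy; rewrite !inE.
split; first exact: clar_matching_perfect.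
split; first exact: clar_matching_perfect.
have [hS _] := (hex_compP (hex i1)).2 (ex_intro _ i1 erefl).
by exists (hex i1) => //; rewrite (eq_bigl _ _ xyP) big_pred1_eq.
Qed.

End ClarCover.

Lemma fset_enum_ord (T : choiceType) (A : {fset T}) n :
  #|` A| = n -> exists f : 'I_n -> T, injective f /\ forall x, x \in A <-> exists i, f i = x.
Proof.
move=> /eqP sz; exists (tnth (Tuple sz)); split; first exact/tuple_uniqP/fset_uniq.
move=> x; split => [xA|[i <-]]; last exact: mem_tnth.
by have /tnthP [i ->] : x \in Tuple sz := xA; exists i.
Qed.

Theorem lemma1 (S : {fset Cell}) (n : nat) :
  hexagonal_system S -> kekulean S ->
  forall F : {fset Edge}, clar_cover S F ->
  (exists Hc : {fset Cell}, (forall h, h \in Hc <-> hex_comp S F h) /\ #|` Hc| = n) ->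
  exists phi : {ffun 'I_n -> bool} -> {fset Edge},
    injective phi /\
    (forall M, fC S F M <-> exists x, phi x = M) /\
    (forall x y, res_adj S (phi x) (phi y) <-> cube_adj x y).
Proof.
move=> _ _ F cover [Hc [HcP cardHc]].
have [hex [hex_inj hexP]] := fset_enum_ord cardHc.
have hex_compP h : hex_comp S F h <-> exists i, hex i = h.
  by split => [/HcP/hexP | /hexP/HcP].
exists (clar_matching F hex); split; [|split].
- exact: clar_matching_inj cover hex_inj hex_compP.
- move=> M; split => [/(fC_clar_matching cover hex_compP) ->|[x <-]]; first by eexists.
  exact: clar_matching_fC cover hex_inj hex_compP x.
- exact: res_adj_clar_matching cover hex_inj hex_compP.
Qed.
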